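(* Let $\mathcal{G}=(\mathcal{V},\mathcal{E},\mathcal{W})$ be an undirected weighted graph with negative-weight edge set $\mathcal{E}_-$ and positive-weight edge set $\mathcal{E}_+$, and assume $\mathcal{G}_+=(\mathcal{V},\mathcal{E}_+)$ (with its weights) is connected. If $L(\mathcal{G})$ is positive semi-definite, then $$\sum_{k\in\mathcal{E}_-}|\mathcal{W}(k)|^{-1}\ \ge\ \mathbf{R}_{tot}:=\operatorname{trace}\big(E_-^TL^{\dagger}(\mathcal{G}_+)E_-\big)=\sum_{k=(u_k,v_k)\in\mathcal{E}_-}\mathcal{R}_{u_kv_k}(\mathcal{G}_+),$$ where $E_-$ is the incidence matrix of the graph $(\mathcal{V},\mathcal{E}_-)$.
   Context: Weights $\mathcal{W}:\mathcal{E}\to\mathbb{R}\setminus\{0\}$; with an arbitrary edge orientation the incidence matrix has in the column of edge $(i,j)$ entry $+1$ in row $i$, $-1$ in row $j$, $0$ elsewhere; $L(\mathcal{G})=EWE^T$ with $W$ the diagonal weight matrix. $L^{\dagger}$ denotes the Moore–Penrose pseudo-inverse, and the effective resistance is $\mathcal{R}_{uv}(\mathcal{H})=(\mathbf{e}_u-\mathbf{e}_v)^TL^{\dagger}(\mathcal{H})(\mathbf{e}_u-\mathbf{e}_v)$ with $\mathbf{e}_u$ the standard basis vector of node $u$. *)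

From HB Require Import structures.
From mathcomp Require Import all_boot all_order all_algebra.
From Stdlib Require Import ClassicalEpsilon.
Set Implicit Arguments. Unset Strict Implicit. Unset Printing Implicit Defensive.
Import Order.TTheory GRing.Theory Num.Theory.
Local Open Scope ring_scope.

Definition is_mpinv (R : realFieldType) (n : nat) (A X : 'M[R]_n) : Prop :=
  [/\ A *m X *m A = A, X *m A *m X = X,
      (A *m X)^T = A *m X & (X *m A)^T = X *m A].

Definition mpinv (R : realFieldType) (n : nat) (A : 'M[R]_n) : 'M[R]_n :=
  epsilon (inhabits 0) (fun X => is_mpinv A X).

(* A graph on vertices 'I_n with m edges; edge k joins u k and v k
   (arbitrary orientation u k -> v k). *)

(* Incidence matrix of the sub-graph whose edges are those k with P k:
   column k is e_{u k} - e_{v k} if P k, and 0 otherwise (absent edge). *)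
Definition incidence (R : realFieldType) (n m : nat) (u v : 'I_m -> 'I_n)
  (P : pred 'I_m) : 'M[R]_(n, m) :=
  \matrix_(i, k) (if P k then ((i == u k)%:R - (i == v k)%:R) else 0).

Definition laplacian (R : realFieldType) (n m : nat) (u v : 'I_m -> 'I_n)
  (w : 'I_m -> R) (P : pred 'I_m) : 'M[R]_n :=
  incidence R u v P *m diag_mx (\row_k w k) *m (incidence R u v P)^T.

Definition psd (R : realFieldType) (n : nat) (A : 'M[R]_n) : Prop :=
  forall x : 'cV[R]_n, 0 <= (x^T *m A *m x) 0 0.

Definition adj (n m : nat) (u v : 'I_m -> 'I_n) (P : pred 'I_m) : rel 'I_n :=
  fun x y => [exists k, P k && (((u k == x) && (v k == y)) || ((u k == y) && (v k == x)))].

Definition connected_graph (n m : nat) (u v : 'I_m -> 'I_n) (P : pred 'I_m) : Prop :=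
  forall x y : 'I_n, connect (adj u v P) x y.

Definition evec (R : realFieldType) (n : nat) (i : 'I_n) : 'cV[R]_n := delta_mx i 0.
Arguments evec : clear implicits.

Definition eff_res (R : realFieldType) (n : nat) (L : 'M[R]_n) (a b : 'I_n) : R :=
  ((evec R n a - evec R n b)^T *m mpinv L *m (evec R n a - evec R n b)) 0 0.

(** The Penrose equations make [Lp *m mpinv Lp] fix every edge vector
    [e_u - e_v] of the connected positive graph [G+].  For a negative edge
    [k], the potential [y := mpinv Lp *m (e_u - e_v)] therefore satisfies
    [y^T Lp y = y_u - y_v = R_uv(G+)].  Evaluating the psd full Laplacian at
    [y] and keeping only the term of edge [k] among the nonpositive ones gives
    [0 <= R + w_k R^2], i.e. [R <= |w_k|^-1]; summing over the negative edges
    bounds the trace, which is the sum of these resistances. *)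

From HB Require Import structures.
From mathcomp Require Import all_boot all_order all_algebra.
From mathcomp Require Import ring lra.
From Stdlib Require Import ClassicalEpsilon.
Set Implicit Arguments.
Unset Strict Implicit.
Unset Printing Implicit Defensive.
Import Order.TTheory GRing.Theory Num.Theory.
Local Open Scope ring_scope.

Section PseudoInverse.

Variable R : realFieldType.

Lemma mulmx_trmx_unitmx r n (G : 'M[R]_(r, n)) :
  row_free G -> G *m G^T \in unitmx.
Proof.
move=> freeG; rewrite -row_free_unit -kermx_eq0; apply/rowV0P => x /sub_kermxP xGG0.
have xG0 : x *m G = 0.
  apply/matrixP => i j; rewrite (ord1 i) mxE.
  have : ((x *m G) *m (x *m G)^T) 0 0 = 0.
    by rewrite trmx_mul !mulmxA -(mulmxA x) xGG0 mul0mx mxE.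
  rewrite mxE => /eqP; rewrite psumr_eq0 => [/allP /(_ j (mem_index_enum _))|k _].
    by rewrite !mxE -expr2 sqrf_eq0 => /eqP.
  by rewrite !mxE -expr2 sqr_ge0.
by apply/eqP; rewrite -(mulmx_free_eq0 _ freeG) xG0.
Qed.

Lemma is_mpinv_full_rank_factor n r (F : 'M[R]_(n, r)) (G : 'M[R]_(r, n)) :
  G *m G^T \in unitmx -> F^T *m F \in unitmx ->
  is_mpinv (F *m G) (G^T *m invmx (G *m G^T) *m invmx (F^T *m F) *m F^T).
Proof.
move=> uG uF; set iG := invmx (G *m G^T); set iF := invmx (F^T *m F).
have AX : F *m G *m (G^T *m iG *m iF *m F^T) = F *m iF *m F^T.
  by rewrite !mulmxA -(mulmxA F G) -(mulmxA F) mulmxV // mulmx1.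
have XA : G^T *m iG *m iF *m F^T *m (F *m G) = G^T *m iG *m G.
  by rewrite !mulmxA -(mulmxA _ F^T F) -(mulmxA _ iF) mulVmx // mulmx1.
have iFT : iF^T = iF by rewrite trmx_inv trmx_mul trmxK.
have iGT : iG^T = iG by rewrite trmx_inv trmx_mul trmxK.
split.
- by rewrite AX !mulmxA -(mulmxA _ F^T F) -(mulmxA _ iF) mulVmx // mulmx1.
- by rewrite XA !mulmxA -(mulmxA _ G G^T) -(mulmxA G^T iG) mulVmx // mulmx1.
- by rewrite AX !trmx_mul trmxK iFT mulmxA.
- by rewrite XA !trmx_mul trmxK iGT mulmxA.
Qed.

Lemma mpinvP n (A : 'M[R]_n) : is_mpinv A (mpinv A).
Proof.
apply: (@epsilon_spec _ _ (is_mpinv A)); rewrite -{1}(mulmx_base A).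
eexists; apply: is_mpinv_full_rank_factor.
  exact/mulmx_trmx_unitmx/row_base_free.
rewrite -{2}[col_base A]trmxK; apply: mulmx_trmx_unitmx.
by rewrite /row_free mxrank_tr; apply: col_base_full.
Qed.

End PseudoInverse.

Section Laplacian.

Variables (R : realFieldType) (n m : nat) (u v : 'I_m -> 'I_n).
Implicit Types (w : 'I_m -> R) (P : pred 'I_m) (y : 'cV[R]_n).

Local Notation e := (evec R n).

Lemma trmx_mul_evec (y : 'cV[R]_n) a : (y^T *m e a) 0 0 = y a 0.
Proof. by rewrite -colE !mxE. Qed.

Lemma trmx_evecB_mul (a c : 'I_n) y :
  ((e a - e c)^T *m y) 0 0 = y a 0 - y c 0.
Proof. by rewrite linearB /= mulmxBl !trmx_delta -!rowE !mxE. Qed.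

Lemma col_incidence P k :
  col k (incidence R u v P) = if P k then e (u k) - e (v k) else 0.
Proof.
apply/matrixP => i j; rewrite (ord1 j) !mxE.
by case: (P k); rewrite ?mxE // !andbT.
Qed.

Lemma trmx_incidence_mul P y k :
  ((incidence R u v P)^T *m y) k 0 = if P k then y (u k) 0 - y (v k) 0 else 0.
Proof.
have -> : ((incidence R u v P)^T *m y) k 0 = ((col k (incidence R u v P))^T *m y) 0 0.
  by rewrite tr_col -row_mul !mxE.
by rewrite col_incidence; case: (P k); rewrite ?trmx_evecB_mul // trmx0 mul0mx mxE.
Qed.

Lemma laplacian_quad w P y :
  (y^T *m laplacian u v w P *m y) 0 0 =
  \sum_(k | P k) w k * (y (u k) 0 - y (v k) 0) ^+ 2.
Proof.
set E := incidence R u v P.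
have -> : y^T *m (E *m diag_mx (\row_k w k) *m E^T) *m y =
          (E^T *m y)^T *m diag_mx (\row_k w k) *m (E^T *m y).
  by rewrite trmx_mul trmxK !mulmxA.
rewrite mxE [RHS]big_mkcond /=; apply: eq_bigr => k _.
rewrite mul_mx_diag [in LHS]mxE [(E^T *m y)^T 0 k]mxE [(\row__ _) 0 k]mxE.
rewrite /E trmx_incidence_mul.
by case: (P k); rewrite ?mul0r //; ring.
Qed.

End Laplacian.

Lemma fix_evecB_connect (R : realFieldType) n m (u v : 'I_m -> 'I_n) (P : pred 'I_m)
    (M : 'M[R]_n) :
  (forall k, P k -> M *m (evec R n (u k) - evec R n (v k)) = evec R n (u k) - evec R n (v k)) ->
  forall a b, connect (adj u v P) a b -> M *m (evec R n a - evec R n b) = evec R n a - evec R n b.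
Proof.
move=> Medge a b /connectP [p pth ->] {b}.
elim: p a pth => [|c p IHp] a /=; first by rewrite subrr mulmx0.
case/andP => /existsP [k /andP [Pk edge_k]] /IHp {}IHp.
rewrite -[evec R n a - _](subrKA (evec R n c)) mulmxDr IHp; congr (_ + _).
case/orP: edge_k => /andP [/eqP <- /eqP <-]; first exact: Medge.
by rewrite -opprB mulmxN Medge.
Qed.

Definition potential (R : realFieldType) n (L : 'M[R]_n) (a b : 'I_n) : 'cV[R]_n :=
  mpinv L *m (evec R n a - evec R n b).

Lemma eff_res_potential (R : realFieldType) n (L : 'M[R]_n) a b :
  eff_res L a b = potential L a b a 0 - potential L a b b 0.
Proof. by rewrite /eff_res -mulmxA trmx_evecB_mul. Qed.

Section PositiveLaplacian.

Variables (R : realFieldType) (n m : nat) (u v : 'I_m -> 'I_n).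
Variables (w : 'I_m -> R) (P : pred 'I_m).
Hypothesis wP : forall k, P k -> 0 < w k.

Local Notation e := (evec R n).
Local Notation L := (laplacian u v w P).

Lemma laplacian_quad_eq0 (y : 'cV[R]_n) :
  (y^T *m L *m y) 0 0 = 0 -> forall k, P k -> y (u k) 0 = y (v k) 0.
Proof.
have sq_ge0 i : P i -> 0 <= w i * (y (u i) 0 - y (v i) 0) ^+ 2.
  by move=> /wP/ltW w_ge0; rewrite mulr_ge0 ?sqr_ge0.
rewrite laplacian_quad => /eqP; rewrite psumr_eq0 // => /allP sq0 k Pk.
move: (sq0 k (mem_index_enum _)); rewrite Pk /= mulf_eq0 (gt_eqF (wP Pk)).
by rewrite sqrf_eq0 subr_eq0 => /eqP.
Qed.

(* The row [z^T := e_i^T (L X - 1)] annihilates [L], so [z] has zero energy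
   and takes equal values at the ends of every edge of [P]. *)
Lemma laplacian_pinv_fix_edge X :
  L *m X *m L = L -> forall k, P k -> L *m X *m (e (u k) - e (v k)) = e (u k) - e (v k).
Proof.
move=> LXL k Pk; apply/eqP; rewrite -subr_eq0 -[X in _ - X == 0]mul1mx -mulmxBl.
apply/eqP/matrixP => i j; rewrite (ord1 j) [RHS]mxE.
set z := (L *m X - 1%:M)^T *m e i.
have zL : z^T *m L = 0 by rewrite trmx_mul trmxK -mulmxA mulmxBl LXL mul1mx subrr mulmx0.
have z_edge : z (u k) 0 = z (v k) 0.
  by apply: (@laplacian_quad_eq0 z _ k Pk); rewrite zL mul0mx mxE.
move/eqP: z_edge; rewrite -subr_eq0 -trmx_evecB_mul /z mulmxA -trmx_mul.
by rewrite trmx_mul_evec => /eqP.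
Qed.

Hypothesis connP : connected_graph u v P.

Lemma laplacian_mpinv_evecB a b : L *m mpinv L *m (e a - e b) = e a - e b.
Proof.
have [LXL _ _ _] := mpinvP L.
exact: fix_evecB_connect (laplacian_pinv_fix_edge LXL) a b (connP a b).
Qed.

Lemma laplacian_energy_potential a b :
  ((potential L a b)^T *m L *m potential L a b) 0 0 = eff_res L a b.
Proof.
rewrite eff_res_potential -mulmxA {2}/potential (mulmxA L) laplacian_mpinv_evecB.
by rewrite -[_ *m _]trmxK trmx_mul trmxK mxE trmx_evecB_mul.
Qed.

End PositiveLaplacian.

Lemma mxtrace_trmx_mulmx (R : realFieldType) p q (B : 'M[R]_(p, q)) (X : 'M[R]_p) :
  \tr (B^T *m X *m B) = \sum_k ((col k B)^T *m X *m col k B) 0 0.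
Proof.
apply: eq_bigr => k _.
by rewrite tr_col rowE colE !mulmxA -colE -!mulmxA -rowE [col _ _ _ _]mxE [row _ _ _ _]mxE.
Qed.

Lemma le_normrV_of_quad_ge0 (R : realFieldType) (c d : R) :
  c < 0 -> 0 <= d + c * d ^+ 2 -> d <= `|c|^-1.
Proof.
move=> c_lt0 quad_ge0; rewrite ltr0_norm // -[(- c)^-1]mul1r ler_pdivlMr ?oppr_gt0 //.
nra.
Qed.

Section SignedLaplacian.

Variables (R : realFieldType) (n m : nat) (u v : 'I_m -> 'I_n) (w : 'I_m -> R).
Hypothesis connected_pos : connected_graph u v (fun k => 0 < w k).
Hypothesis psd_laplacian : psd (laplacian u v w predT).

Local Notation Lp := (laplacian u v w (fun k => 0 < w k)).

Lemma eff_res_le_normrV k : w k < 0 -> eff_res Lp (u k) (v k) <= `|w k|^-1.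
Proof.
move=> wk_lt0; apply: (le_normrV_of_quad_ge0 wk_lt0).
set y := potential Lp (u k) (v k).
have energy := laplacian_energy_potential (fun _ => id) connected_pos (u k) (v k).
have nonpos_le : \sum_(j | ~~ (0 < w j)) w j * (y (u j) 0 - y (v j) 0) ^+ 2
                 <= w k * eff_res Lp (u k) (v k) ^+ 2.
  rewrite (bigD1 k) /=; last by rewrite -leNgt (ltW wk_lt0).
  rewrite eff_res_potential -/y gerDl.
  apply: sumr_le0 => j /andP [wj_le0 _].
  by rewrite mulr_le0_ge0 ?sqr_ge0 // leNgt.
have := psd_laplacian y; rewrite laplacian_quad (bigID (fun j => 0 < w j)) /=.
rewrite -(@laplacian_quad _ _ _ u v w (fun j => 0 < w j)) energy.
by move: nonpos_le; lra.
Qed.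

End SignedLaplacian.

Theorem corollary3 (R : realFieldType) (n m : nat)
  (u v : 'I_m -> 'I_n) (w : 'I_m -> R)
  (Hloop : forall k, u k != v k)
  (Hsimple : forall k l, k != l ->
     (u k, v k) != (u l, v l) /\ (u k, v k) != (v l, u l))
  (Hw : forall k, w k != 0)
  (Hconn : connected_graph u v (fun k => 0 < w k))
  (Hpsd : psd (laplacian u v w predT)) :
  let Lp := laplacian u v w (fun k => 0 < w k) in
  let Em := incidence R u v (fun k => w k < 0) in
  \tr (Em^T *m mpinv Lp *m Em) = \sum_(k | w k < 0) eff_res Lp (u k) (v k) /\
  \tr (Em^T *m mpinv Lp *m Em) <= \sum_(k | w k < 0) `|w k|^-1.
Proof.
move=> Lp Em.
have tr_eff_res : \tr (Em^T *m mpinv Lp *m Em) = \sum_(k | w k < 0) eff_res Lp (u k) (v k).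
  rewrite mxtrace_trmx_mulmx [RHS]big_mkcond; apply: eq_bigr => k _.
  by rewrite col_incidence; case: ifP => _ //; rewrite trmx0 !mul0mx mxE.
split=> //; rewrite tr_eff_res; apply: ler_sum => k.
exact: (eff_res_le_normrV Hconn Hpsd).
Qed.
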